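(* Consider the compact finite difference scheme (defined in the context) for the one-dimensional two-sided space fractional diffusion problem with $1<\alpha\le 2$ and diffusion coefficients $K_1,K_2\ge 0$, $K_1^2+K_2^2\neq0$. If $(p,q)=(1,0)$, the scheme is unconditionally stable for all $1<\alpha\le2$; if $(p,q)=(1,-1)$, the scheme is unconditionally stable for all $\frac{1+\sqrt{73}}{6}\le\alpha\le2$.
   Context: Problem: $\partial_t u=K_1\,{}_aD_x^\alpha u+K_2\,{}_xD_b^\alpha u+f(x,t)$ on $(a,b)\times(0,T]$, $u(x,0)=u_0(x)$, $u(a,t)=\phi_a(t)$, $u(b,t)=\phi_b(t)$, where ${}_aD_x^\alpha u(x)=\frac{1}{\Gamma(2-\alpha)}\frac{d^2}{dx^2}\int_a^x\frac{u(\xi)}{(x-\xi)^{\alpha-1}}d\xi$ and ${}_xD_b^\alpha u(x)=\frac{1}{\Gamma(2-\alpha)}\frac{d^2}{dx^2}\int_x^b\frac{u(\xi)}{(\xi-x)^{\alpha-1}}d\xi$ for $1<\alpha<2$ (both equal $u''$ for $\alpha=2$); $\phi_a\equiv0$ if $K_1\ne0$ and $\phi_b\equiv0$ if $K_2\ne0$. Grid: $h=(b-a)/N$, $\tau=T/M$, $x_i=a+ih$, $t_n=n\tau$. Let $g_k^{(\alpha)}=(-1)^k\binom{\alpha}{k}$. Weights: for $(p,q)=(1,0)$, $w_0^{(\alpha)}=\frac{\alpha}{2}g_0^{(\alpha)}$, $w_k^{(\alpha)}=\frac{\alpha}{2}g_k^{(\alpha)}+\frac{2-\alpha}{2}g_{k-1}^{(\alpha)}$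 ($k\ge1$); for $(p,q)=(1,-1)$, $w_0^{(\alpha)}=\frac{2+\alpha}{4}g_0^{(\alpha)}$, $w_1^{(\alpha)}=\frac{2+\alpha}{4}g_1^{(\alpha)}$, $w_k^{(\alpha)}=\frac{2+\alpha}{4}g_k^{(\alpha)}+\frac{2-\alpha}{4}g_{k-2}^{(\alpha)}$ ($k\ge2$). Let $c=c^\alpha_{1,0,2}=\frac{7\alpha-3\alpha^2}{24}$ if $(p,q)=(1,0)$ and $c=c^\alpha_{1,-1,2}=\frac{\alpha-3\alpha^2+12}{24}$ if $(p,q)=(1,-1)$. For a grid function $V$, $\mathcal{C}_xV_i=V_i+c(V_{i-1}-2V_i+V_{i+1})$. The scheme: for $1\le i\le N-1$, $0\le n\le M-1$, $\mathcal{C}_xU_i^{n+1}-\frac{K_1\tau}{2h^\alpha}\sum_{k=0}^{i+1}w_k^{(\alpha)}U^{n+1}_{i-k+1}-\frac{K_2\tau}{2h^\alpha}\sum_{k=0}^{N-i+1}w_k^{(\alpha)}U^{n+1}_{i+k-1}=\mathcal{C}_xU_i^{n}+\frac{K_1\tau}{2h^\alpha}\sum_{k=0}^{i+1}w_k^{(\alpha)}U^{n}_{i-k+1}+\frac{K_2\tau}{2h^\alpha}\sum_{k=0}^{N-i+1}w_k^{(\alpha)}U^{n}_{i+k-1}+\tau\,\mathcal{C}_xf_i^{n+1/2}$, with $f_i^{n+1/2}=f(x_i,t_n+\tau/2)$, $U_0^n=\phi_a(t_n)$, $U_N^n=\phi_b(t_n)$, $U_i^0=u_0(x_i)$. In matrix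 form on the interior unknowns $U^n=(U^n_1,\dots,U^n_{N-1})^T$ it reads $(C_\alpha-D_\alpha)U^{n+1}=(C_\alpha+D_\alpha)U^n+(\text{terms from }f\text{ and boundary values})$, where $C_\alpha=I_{N-1}+c\,\mathrm{tridiag}(1,-2,1)$, $D_\alpha=\frac{\tau}{2h^\alpha}(K_1A_\alpha+K_2A_\alpha^T)$ and $A_\alpha$ is the $(N-1)\times(N-1)$ matrix with $(A_\alpha)_{ij}=w^{(\alpha)}_{i-j+1}$ if $i-j+1\ge0$ and $0$ otherwise. Unconditionally stable means: for every $\tau>0$ and every $N\ge2$, $C_\alpha-D_\alpha$ is invertible and the spectral radius of $(C_\alpha-D_\alpha)^{-1}(C_\alpha+D_\alpha)$ is less than $1$. *)

From HB Require Import structures.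
From mathcomp Require Import all_boot all_order all_algebra.
From mathcomp Require Import complex.
From mathcomp Require Import boolp classical_sets reals exp.
Set Implicit Arguments. Unset Strict Implicit. Unset Printing Implicit Defensive.
Import Order.TTheory GRing.Theory Num.Theory.
Local Open Scope ring_scope.

Section Defs.
Variable R : realType.

Definition gbinom (alpha : R) (k : nat) : R :=
  (\prod_(i < k) (alpha - i%:R)) / (k`!)%:R.

Definition gw (alpha : R) (k : nat) : R := (-1) ^+ k * gbinom alpha k.

Inductive pq_choice := PQ_1_0 | PQ_1_m1.

Definition wgt (s : pq_choice) (alpha : R) (k : nat) : R :=
  match s with
  | PQ_1_0 =>
      if k is k'.+1 then alpha / 2 * gw alpha k + (2 - alpha) / 2 * gw alpha k'
      else alpha / 2 * gw alpha 0
  | PQ_1_m1 =>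
      if k is k''.+2 then (2 + alpha) / 4 * gw alpha k + (2 - alpha) / 4 * gw alpha k''
      else (2 + alpha) / 4 * gw alpha k
  end.

Definition cconst (s : pq_choice) (alpha : R) : R :=
  match s with
  | PQ_1_0 => (7 * alpha - 3 * alpha ^+ 2) / 24
  | PQ_1_m1 => (alpha - 3 * alpha ^+ 2 + 12) / 24
  end.

Definition Amat (s : pq_choice) (alpha : R) (n : nat) : 'M[R]_n :=
  \matrix_(i < n, j < n) if (j <= i.+1)%N then wgt s alpha (i.+1 - j) else 0.

Definition tridiag (n : nat) : 'M[R]_n :=
  \matrix_(i < n, j < n)
    if i == j then -2 else if (i.+1 == j :> nat) || (j.+1 == i :> nat) then 1 else 0.

Definition Cmat (s : pq_choice) (alpha : R) (n : nat) : 'M[R]_n :=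
  1%:M + cconst s alpha *: tridiag n.

Definition Dmat (s : pq_choice) (alpha K1 K2 tau h : R) (n : nat) : 'M[R]_n :=
  (tau / (2 * powR h alpha)) *: (K1 *: Amat s alpha n + K2 *: (Amat s alpha n)^T).

Definition cmod (z : R[i]) : R := Num.sqrt (complex.Re z ^+ 2 + complex.Im z ^+ 2).

Local Open Scope classical_set_scope.
Definition spectral_radius (n : nat) (M : 'M[R]_n) : R :=
  sup [set r : R | exists2 lam : R[i],
          eigenvalue (map_mx (fun x : R => x%:C%C) M) lam & r = cmod lam].

End Defs.

(* Stability is the Cayley-transform argument: if C is symmetric positive
   definite and D is negative definite (p D p^T < 0 for p <> 0, D need not be
   symmetric), then C - D is invertible and every complex eigenvalue of
   (C - D)^-1 (C + D) has modulus < 1.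
   Both definiteness statements are about quadratic forms of lower Hessenberg
   Toeplitz matrices A_ij = h_(i-j+1).  In terms of the autocorrelations
   r_e = sum_k x_k x_(k+e) such a form equals
   (h_0 + h_2) r_1 + h_1 r_0 + h_3 r_2 + sum_(d >= 4) h_d r_(d-1),
   and r_e <= r_0, 0 <= r_0 - r_2 <= 4 (r_0 - r_1).  The weights w_k are
   combinations of the binomial coefficients g^(alpha-1), so w_k >= 0 for
   k >= 4 and their partial sums are <= 0; with the explicit values of
   w_0, ..., w_3 this makes x A x^T < 0.  For C = I + c tridiag(1,-2,1)
   positivity holds for 0 < c <= 1/4, and c <= 1/4 is exactly the condition
   3 alpha^2 - alpha - 6 >= 0, i.e. alpha >= (1 + sqrt 73) / 6, when
   (p, q) = (1, -1). *)

From HB Require Import structures.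
From mathcomp Require Import all_boot all_order all_algebra.
From mathcomp Require Import complex.
From mathcomp Require Import boolp classical_sets reals exp.
From mathcomp.algebra_tactics Require Import ring lra.
From mathcomp Require Import zify.
Set Implicit Arguments.
Unset Strict Implicit.
Unset Printing Implicit Defensive.
Import Order.TTheory GRing.Theory Num.Theory.
Local Open Scope ring_scope.

Lemma sum_nat4 (V : nmodType) (F : nat -> V) :
  \sum_(0 <= i < 4) F i = F 0%N + F 1%N + F 2%N + F 3%N.
Proof. by rewrite !big_nat_recl //= big_nil addr0 !addrA. Qed.

Section ToeplitzForm.
Variables (R : realFieldType) (n : nat) (x : 'I_n -> R).

(* All sums below run
   over the window [0, n + 4), which leaves room for shifts by up to 2; the
   leading zeros also absorb the truncated subtraction in [lagprod]. *)
Definition pad (k : nat) : R := if (2 <= k)%N then oapp x 0 (insub (k - 2)%N) else 0.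

Local Notation K := n.+4.

Lemma pad0 : pad 0 = 0. Proof. by []. Qed.
Lemma pad1 : pad 1 = 0. Proof. by []. Qed.

Lemma pad_out k : (n.+2 <= k)%N -> pad k = 0.
Proof.
move=> hk; rewrite /pad; case: ifP => // _.
by rewrite insubN //= -ltnNge; lia.
Qed.

Lemma padK : pad K = 0. Proof. by rewrite pad_out //; lia. Qed.
Lemma padSK : pad K.+1 = 0. Proof. by rewrite pad_out //; lia. Qed.

Lemma padS2 (i : 'I_n) : pad i.+2 = x i.
Proof. by rewrite /pad /= subn2 /= valK. Qed.

Lemma sum_pad (G : nat -> R) :
  \sum_(0 <= k < K) pad k * G k = \sum_(i < n) x i * G i.+2.
Proof.
rewrite (@big_cat_nat _ _ _ 2) // big_nat_recl // big_nat_recl // big_geq //.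
rewrite /= pad0 pad1 !mul0r !add0r.
rewrite (@big_cat_nat _ _ _ n.+2) //=; last by lia.
rewrite [X in _ + X]big_nat_cond [X in _ + X]big1 ?addr0; last first.
  by move=> k /andP[/andP[hk _] _]; rewrite pad_out ?mul0r.
rewrite -{1}[2%N]add0n big_addn !subSS subn0 big_mkord.
by apply: eq_bigr => i _; rewrite addn2 padS2.
Qed.

Lemma sum_shift (F : nat -> R) : F 0%N = F K ->
  \sum_(0 <= k < K) F k.+1 = \sum_(0 <= k < K) F k.
Proof.
move=> h; have := big_nat_recl K 0 F (leq0n _) (op := +%R) (idx := 0).
by rewrite big_nat_recr //= h addrC => /addrI.
Qed.

Definition hess_entry (h : nat -> R) (k l : nat) : R :=
  if (l <= k.+1)%N then h (k.+1 - l)%N else 0.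

Definition toeplitz_form (h : nat -> R) : R :=
  \sum_(i < n) \sum_(j < n) x i * hess_entry h i j * x j.

Definition lagprod (d : nat) : R := \sum_(0 <= k < K) pad k * pad (k.+1 - d).

Lemma sum_hess_entry_pad (h : nat -> R) k : (k < K)%N ->
  \sum_(0 <= l < K) hess_entry h k l * pad l =
  \sum_(0 <= d < K.+1) h d * pad (k.+1 - d).
Proof.
move=> hk.
rewrite [RHS](@big_cat_nat _ _ _ k.+2) //=.
rewrite [X in _ = _ + X]big_nat_cond [X in _ = _ + X]big1 ?addr0; last first.
  by move=> d /andP[/andP[hd _] _]; rewrite (_ : k.+1 - d = 0)%N ?pad0 ?mulr0 //; lia.
transitivity (\sum_(0 <= l < K.+1) hess_entry h k l * pad l).
  by rewrite [RHS]big_nat_recr //= padK mulr0 addr0.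
rewrite (@big_cat_nat _ _ _ k.+2) //=.
rewrite [X in _ + X = _]big_nat_cond [X in _ + X = _]big1 ?addr0; last first.
  move=> l /andP[/andP[hl _] _].
  by rewrite /hess_entry ifF ?mul0r //; apply/negbTE; rewrite -ltnNge.
rewrite big_nat_rev /=; apply: eq_big_nat => l /andP[_ hl].
rewrite /hess_entry add0n ifT; last by lia.
by congr (h _ * pad _); lia.
Qed.

Lemma toeplitz_formE (h : nat -> R) :
  toeplitz_form h = \sum_(0 <= d < K.+1) h d * lagprod d.
Proof.
transitivity (\sum_(0 <= k < K) pad k * \sum_(0 <= l < K) hess_entry h k l * pad l).
  rewrite sum_pad /toeplitz_form; apply: eq_bigr => i _.
  rewrite (eq_bigr (fun l => pad l * hess_entry h i.+2 l)) => [|l _]; last exact: mulrC.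
  rewrite sum_pad mulr_sumr; apply: eq_bigr => j _.
  by rewrite /hess_entry /= subSS mulrA mulrAC.
rewrite /lagprod; under [RHS]eq_bigr do rewrite mulr_sumr.
rewrite [RHS]exchange_big /=; apply: eq_big_nat => k /andP[_ hk].
rewrite sum_hess_entry_pad // mulr_sumr.
by apply: eq_bigr => d _; rewrite mulrCA.
Qed.

Definition acor (e : nat) : R := \sum_(0 <= k < K) pad k * pad (k + e).

Lemma acor0E : acor 0 = \sum_(i < n) x i ^+ 2.
Proof. by rewrite /acor sum_pad; apply: eq_bigr => i _; rewrite addn0 padS2 expr2. Qed.

Lemma acor0_ge0 : 0 <= acor 0.
Proof. by rewrite acor0E; apply: sumr_ge0 => i _; exact: sqr_ge0. Qed.

Lemma lagprod0 : lagprod 0 = acor 1.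
Proof. by apply: eq_bigr => k _; rewrite subn0 addn1. Qed.

Lemma lagprod1 : lagprod 1 = acor 0.
Proof. by apply: eq_bigr => k _; rewrite subn1 addn0. Qed.

Lemma lagprod2 : lagprod 2 = acor 1.
Proof.
rewrite /lagprod -sum_shift; last by rewrite pad0 padK !mul0r.
by apply: eq_bigr => k _; rewrite subSS subn1 addn1 mulrC.
Qed.

Lemma lagprod3 : lagprod 3 = acor 2.
Proof.
rewrite /lagprod -sum_shift; last by rewrite pad0 padK !mul0r.
rewrite -sum_shift; last by rewrite pad1 padSK !mul0r.
by apply: eq_bigr => k _; rewrite !subSS subn0 addn2 mulrC.
Qed.

Lemma sum_pad_sub_sq e : \sum_(0 <= k < K) pad (k - e) ^+ 2 <= acor 0.
Proof.
elim: e => [|e IH].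
  by apply: ler_sum => k _; rewrite subn0 addn0 expr2.
apply: le_trans IH.
rewrite big_nat_recl //= sub0n pad0 expr0n /= add0r [leRHS]big_nat_recr //=.
under eq_bigr do rewrite subSS.
by rewrite lerDl sqr_ge0.
Qed.

Lemma lagprod_le d : (1 <= d)%N -> lagprod d <= acor 0.
Proof.
move=> hd; have := sum_pad_sub_sq d.-1.
suff : lagprod d <= (acor 0 + \sum_(0 <= k < K) pad (k - d.-1) ^+ 2) / 2 by lra.
rewrite /acor -big_split /= mulr_suml; apply: ler_sum => k _.
rewrite addn0 (_ : k.+1 - d = k - d.-1)%N; last by lia.
have := sqr_ge0 (pad k - pad (k - d.-1)); lra.
Qed.

Definition dsq (e : nat) : R := \sum_(0 <= k < K) (pad (k + e) - pad k) ^+ 2.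

Lemma sum_padS_sq : \sum_(0 <= k < K) pad k.+1 ^+ 2 = acor 0.
Proof.
rewrite (sum_shift (F := fun k => pad k ^+ 2)); last by rewrite pad0 padK.
by apply: eq_bigr => k _; rewrite addn0 expr2.
Qed.

Lemma sum_padSS_sq : \sum_(0 <= k < K) pad k.+2 ^+ 2 = acor 0.
Proof. by rewrite (sum_shift (F := fun k => pad k.+1 ^+ 2)) ?sum_padS_sq // pad1 padSK. Qed.

Lemma dsqE e : (e <= 2)%N -> dsq e = 2 * acor 0 - 2 * acor e.
Proof.
move=> he; have sq : \sum_(0 <= k < K) pad (k + e) ^+ 2 = acor 0.
  case: e he => [|[|[|//]]] _.
  - by apply: eq_bigr => k _; rewrite addn0 expr2.
  - by under eq_bigr do rewrite addn1; exact: sum_padS_sq.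
  - by under eq_bigr do rewrite addn2; exact: sum_padSS_sq.
transitivity (\sum_(0 <= k < K) pad (k + e) ^+ 2 + acor 0 - 2 * acor e);
  last by rewrite sq; ring.
rewrite /dsq /acor mulr_sumr -big_split -sumrB /=.
by apply: eq_bigr => k _; rewrite addn0; ring.
Qed.

Lemma dsq_ge0 e : 0 <= dsq e.
Proof. by apply: sumr_ge0 => k _; exact: sqr_ge0. Qed.

Lemma dsq2_le : dsq 2 <= 4 * dsq 1.
Proof.
have shifted : \sum_(0 <= k < K) (pad k.+2 - pad k.+1) ^+ 2 = dsq 1.
  rewrite (sum_shift (F := fun k => (pad k.+1 - pad k) ^+ 2)); last first.
    by rewrite pad0 pad1 padK padSK.
  by apply: eq_bigr => k _; rewrite addn1.
suff : dsq 2 <= 2 * \sum_(0 <= k < K) (pad k.+2 - pad k.+1) ^+ 2 + 2 * dsq 1.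
  by rewrite shifted; lra.
rewrite /dsq !mulr_sumr -big_split /=; apply: ler_sum => k _.
rewrite addn1 addn2; have := sqr_ge0 (pad k.+2 - 2 * pad k.+1 + pad k); nra.
Qed.

Lemma pad_chain_eq0 (c : R) :
  \sum_(0 <= k < K) (pad k.+1 - c * pad k) ^+ 2 = 0 -> forall i, x i = 0.
Proof.
move=> /eqP; rewrite psumr_eq0 => [/allP hall|k _]; last exact: sqr_ge0.
have pad_eq0 k : (k <= K)%N -> pad k = 0.
  elim: k => [//|k IH] hk.
  have := hall k; rewrite mem_index_iota sqrf_eq0 IH ?mulr0 ?subr0; last by lia.
  by move=> /(_ _)/eqP; apply; lia.
by move=> i; rewrite -padS2 pad_eq0 //; have := ltn_ord i; lia.
Qed.

Lemma dsq1_gt0 : (exists i, x i != 0) -> 0 < dsq 1.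
Proof.
move=> [i xi]; rewrite lt_def dsq_ge0 andbT; apply: contra xi => /eqP d0.
apply/eqP/(@pad_chain_eq0 1); rewrite -[RHS]d0.
by apply: eq_bigr => k _; rewrite mul1r addn1.
Qed.

Lemma acor01_gt0 : (exists i, x i != 0) -> 0 < acor 0 + acor 1.
Proof.
move=> [i xi].
have -> : acor 0 + acor 1 = (\sum_(0 <= k < K) (pad k.+1 + pad k) ^+ 2) / 2.
  have -> : \sum_(0 <= k < K) (pad k.+1 + pad k) ^+ 2 =
      \sum_(0 <= k < K) pad k.+1 ^+ 2 + acor 0 + 2 * acor 1.
    rewrite /acor mulr_sumr -!big_split /=.
    by apply: eq_bigr => k _; rewrite addn0 addn1; ring.
  by rewrite sum_padS_sq; field.
apply: divr_gt0 => //; rewrite lt_def; apply/andP; split; last first.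
  by apply: sumr_ge0 => k _; exact: sqr_ge0.
apply: contra xi => /eqP s0; apply/eqP/(@pad_chain_eq0 (-1)); rewrite -[RHS]s0.
by apply: eq_bigr => k _; rewrite mulN1r opprK.
Qed.

Lemma toeplitz_form_split (h : nat -> R) :
  toeplitz_form h = (h 0%N + h 2%N) * acor 1 + h 1%N * acor 0 + h 3%N * acor 2
                    + \sum_(4 <= d < K.+1) h d * lagprod d.
Proof.
rewrite toeplitz_formE (@big_cat_nat _ _ _ 4) //=; congr (_ + _).
by rewrite sum_nat4 lagprod0 lagprod1 lagprod2 lagprod3; ring.
Qed.

Lemma toeplitz_form_lt0 (h : nat -> R) :
  (forall d, (4 <= d)%N -> 0 <= h d) ->
  (forall M, (4 <= M)%N -> \sum_(k < M) h k <= 0) ->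
  (0 <= h 3%N /\ 0 < h 0%N + h 2%N) \/ (h 3%N <= 0 /\ 0 < h 0%N + h 2%N + 4 * h 3%N) ->
  (exists i, x i != 0) -> toeplitz_form h < 0.
Proof.
(* With a := r_0 - r_1 = dsq 1 / 2 > 0 and b := r_0 - r_2 = dsq 2 / 2 in [0, 4a],
   the form is at most - (h_0 + h_2) a - h_3 b. *)
move=> tail_ge0 psum_le0 low nz.
pose tail := \sum_(4 <= d < K.+1) h d.
have tail_le : \sum_(4 <= d < K.+1) h d * lagprod d <= tail * acor 0.
  rewrite mulr_suml; apply: ler_sum_nat => d /andP[hd _].
  by apply: ler_wpM2l; [exact: tail_ge0 | apply: lagprod_le; lia].
have sum_le0 : (h 0%N + h 1%N + h 2%N + h 3%N + tail) * acor 0 <= 0.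
  apply: mulr_le0_ge0 acor0_ge0; have := psum_le0 K.+1 isT.
  by rewrite -(big_mkord xpredT) (@big_cat_nat _ _ _ 4) //= sum_nat4.
have := dsq1_gt0 nz; have := dsq_ge0 2; have := dsq2_le.
rewrite toeplitz_form_split !dsqE //.
case: low => [[h3 h02]|[h3 h024]] *; nra.
Qed.

Definition tri (d : nat) : R := nth 0 [:: 1; -2; 1] d.

Lemma toeplitz_form_tri : toeplitz_form tri = 2 * acor 1 - 2 * acor 0.
Proof.
rewrite toeplitz_form_split big_nat_cond big1 => [|d /andP[/andP[hd _] _]].
  by rewrite /tri /=; ring.
by rewrite /tri nth_default ?mul0r //=; lia.
Qed.

Lemma id_add_tri_gt0 (c : R) : 0 < c -> c <= 1 / 4 -> (exists i, x i != 0) ->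
  0 < acor 0 + c * toeplitz_form tri.
Proof.
move=> c_gt0 c_le nz; rewrite toeplitz_form_tri.
have := acor01_gt0 nz; have := acor0_ge0; nra.
Qed.

End ToeplitzForm.

Arguments tri {R} d.

Section Weights.
Variable R : realType.
Implicit Types (al be : R).

Lemma gw0 al : gw al 0 = 1.
Proof. by rewrite /gw /gbinom big_ord0 expr0 mul1r fact0 divr1. Qed.

Lemma gwS al k : gw al k.+1 = gw al k * (k%:R - al) / k.+1%:R.
Proof.
rewrite /gw /gbinom big_ord_recr /= factS natrM exprS.
have k1_neq0 : (k.+1%:R : R) != 0 by rewrite pnatr_eq0.
have fact_neq0 : ((k`!)%:R : R) != 0 by rewrite pnatr_eq0 -lt0n fact_gt0.
by field; rewrite addrC natr1 k1_neq0 fact_neq0.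
Qed.

Lemma gw1 al : gw al 1 = - al.
Proof. by rewrite gwS gw0 mul1r sub0r divr1. Qed.

Lemma gw2 al : gw al 2 = al * (al - 1) / 2.
Proof. by rewrite gwS gw1; field. Qed.

Lemma gw3 al : gw al 3 = al * (al - 1) * (2 - al) / 6.
Proof. by rewrite gwS gw2; field. Qed.

Lemma gwS_pred al k : gw al k.+1 = - al / k.+1%:R * gw (al - 1) k.
Proof.
elim: k => [|k IH]; first by rewrite gw1 gw0 mulr1 divr1.
rewrite gwS IH gwS -!natr1; field.
by rewrite !natr1 !pnatr_eq0.
Qed.

Lemma gw_pascal al k : gw al k.+1 = gw (al - 1) k.+1 - gw (al - 1) k.
Proof. by rewrite gwS_pred gwS -!natr1; field; rewrite natr1 pnatr_eq0. Qed.

Lemma gw_le0 be k : 0 <= be -> be <= 1 -> (1 <= k)%N -> gw be k <= 0.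
Proof.
move=> be_ge0 be_le1; elim: k => [//|[_ _|k IH _]]; first by rewrite gw1 oppr_le0.
rewrite gwS -mulrA mulr_le0_ge0 ?IH // divr_ge0 // subr_ge0.
by rewrite (le_trans be_le1) // ler1n.
Qed.

Lemma gw_ge0 al k : 1 <= al -> al <= 2 -> (2 <= k)%N -> 0 <= gw al k.
Proof.
move=> al_ge1 al_le2; elim: k => [//|[//|[_ _|k IH _]]].
  by rewrite gwS gw1 divr_ge0 //; nra.
rewrite gwS -mulrA mulr_ge0 ?IH // divr_ge0 // subr_ge0.
by rewrite (le_trans al_le2) // ler_nat.
Qed.

Lemma sum_wgt10 al M : \sum_(k < M.+2) wgt PQ_1_0 al k =
  al / 2 * gw (al - 1) M.+1 + (2 - al) / 2 * gw (al - 1) M.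
Proof.
elim: M => [|M IH].
  by rewrite big_ord_recr big_ord1 /= gw1 !gw0 gw1; field.
by rewrite big_ord_recr /= IH (gw_pascal al M.+1) (gw_pascal al M); ring.
Qed.

Lemma sum_wgtm1 al M : \sum_(k < M.+3) wgt PQ_1_m1 al k =
  (2 + al) / 4 * gw (al - 1) M.+2 + (2 - al) / 4 * gw (al - 1) M.
Proof.
elim: M => [|M IH].
  by rewrite !big_ord_recr big_ord0 /= !gw2 gw1 !gw0; field.
by rewrite big_ord_recr /= IH (gw_pascal al M.+2) (gw_pascal al M); ring.
Qed.

Lemma sum_wgt_le0 s al M : 1 <= al -> al <= 2 -> (4 <= M)%N ->
  \sum_(k < M) wgt s al k <= 0.
Proof.
move=> al_ge1 al_le2 M_ge4.
have gw_pred_le0 k : (1 <= k)%N -> gw (al - 1) k <= 0 by apply: gw_le0; lra.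
case: s.
  case: M M_ge4 => [//|[//|M]] M_ge4; rewrite sum_wgt10.
  have := gw_pred_le0 M.+1 isT; have := gw_pred_le0 M (ltnW M_ge4).
  have : 0 <= al / 2 by lra.
  have : 0 <= (2 - al) / 2 by lra.
  nra.
case: M M_ge4 => [//|[//|[//|M]]] M_ge4; rewrite sum_wgtm1.
have := gw_pred_le0 M.+2 isT; have := gw_pred_le0 M M_ge4.
have : 0 <= (2 + al) / 4 by lra.
have : 0 <= (2 - al) / 4 by lra.
nra.
Qed.

Lemma wgt_ge0 s al k : 1 <= al -> al <= 2 -> (4 <= k)%N -> 0 <= wgt s al k.
Proof.
move=> al_ge1 al_le2 k_ge4.
case: s; case: k k_ge4 => [//|[//|[//|k]]] k_ge4 /=.
  have := gw_ge0 (k := k.+3) al_ge1 al_le2 isT; have := gw_ge0 (k := k.+2) al_ge1 al_le2 isT.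
  have : 0 <= al / 2 by lra.
  have : 0 <= (2 - al) / 2 by lra.
  nra.
have := gw_ge0 (k := k.+3) al_ge1 al_le2 isT; have := gw_ge0 (k := k.+1) al_ge1 al_le2 k_ge4.
have : 0 <= (2 + al) / 4 by lra.
have : 0 <= (2 - al) / 4 by lra.
nra.
Qed.

Lemma wgt_low s al : 1 < al -> al <= 2 ->
  let w := wgt s al in
  (0 <= w 3%N /\ 0 < w 0%N + w 2%N) \/ (w 3%N <= 0 /\ 0 < w 0%N + w 2%N + 4 * w 3%N).
Proof.
move=> al_gt1 al_le2 w; rewrite {}/w.
case: s => /=; rewrite gw3 gw2 gw1 gw0; [left | right]; split.
- have -> : al / 2 * (al * (al - 1) * (2 - al) / 6) + (2 - al) / 2 * (al * (al - 1) / 2)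
      = al * (al - 1) * ((2 - al) * (al + 3)) / 12 by field.
  by apply: divr_ge0 => //; rewrite !mulr_ge0 //; lra.
- have -> : al / 2 * 1 + (al / 2 * (al * (al - 1) / 2) + (2 - al) / 2 * - al)
      = al * (al - 1) * (al + 2) / 4 by field.
  by apply: divr_gt0 => //; rewrite !mulr_gt0 //; lra.
- have -> : (2 + al) / 4 * (al * (al - 1) * (2 - al) / 6) + (2 - al) / 4 * - al
      = - ((2 - al) * al * (8 - al - al ^+ 2) / 24) by field.
  by rewrite oppr_le0 divr_ge0 // !mulr_ge0 //; nra.
have -> : (2 + al) / 4 * 1 + ((2 + al) / 4 * (al * (al - 1) / 2) + (2 - al) / 4 * 1) +
    4 * ((2 + al) / 4 * (al * (al - 1) * (2 - al) / 6) + (2 - al) / 4 * - al)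
    = (al - 1) * (3 * (2 + al) * al + 4 * (4 - al ^+ 2) * al + 24 * (al - 1)) / 24 by field.
apply: divr_gt0 => //; apply: mulr_gt0; first lra.
have : 0 < (2 + al) * al by nra.
have : 0 <= (4 - al ^+ 2) * al by apply: mulr_ge0; nra.
nra.
Qed.
End Weights.

Section BilinearForm.
Variables (R : comNzRingType) (n : nat).
Implicit Types (M : 'M[R]_n) (a b p : 'rV[R]_n).

Definition bform M a b : R := (a *m M *m b^T) 0 0.

Lemma bformEr M a b : bform M a b = \sum_j (a *m M) 0 j * b 0 j.
Proof. by rewrite /bform mxE; apply: eq_bigr => j _; rewrite [b^T _ _]mxE. Qed.

Lemma bformE M a b : bform M a b = \sum_i \sum_j a 0 i * M i j * b 0 j.
Proof.
rewrite bformEr exchange_big; apply: eq_bigr => j _.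
by rewrite mxE mulr_suml; exact: eq_bigr.
Qed.

Lemma bformDm M1 M2 a b : bform (M1 + M2) a b = bform M1 a b + bform M2 a b.
Proof. by rewrite /bform mulmxDr mulmxDl mxE. Qed.

Lemma bformBm M1 M2 a b : bform (M1 - M2) a b = bform M1 a b - bform M2 a b.
Proof. by rewrite /bform mulmxBr mulmxBl !mxE. Qed.

Lemma bformZm c M a b : bform (c *: M) a b = c * bform M a b.
Proof. by rewrite /bform -scalemxAr -scalemxAl mxE. Qed.

Lemma bform_trmx M a b : bform M^T a b = bform M b a.
Proof.
rewrite !bformE exchange_big; apply: eq_bigr => i _; apply: eq_bigr => j _.
by rewrite mxE; ring.
Qed.

Lemma bform_id p : bform 1%:M p p = \sum_i p 0 i ^+ 2.
Proof.
rewrite bformE; apply: eq_bigr => i _; rewrite (bigD1 i) //= big1 ?addr0.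
  by rewrite !mxE eqxx mulr1 expr2.
by move=> j ji; rewrite !mxE eq_sym (negbTE ji) mulr0 mul0r.
Qed.

Lemma bform0 M : bform M 0 0 = 0.
Proof. by rewrite /bform mul0mx mul0mx mxE. Qed.

Lemma bform_lincomb M M' a a1 a2 b c1 c2 :
  a *m M = c1 *: (a1 *m M') + c2 *: (a2 *m M') ->
  bform M a b = c1 * bform M' a1 b + c2 * bform M' a2 b.
Proof.
move=> aM; rewrite {1}/bform aM mulmxDl -!scalemxAl mxE.
by rewrite [X in X + _ = _]mxE [X in _ + X = _]mxE.
Qed.

End BilinearForm.

Lemma unitmx_sub_definite (R : realFieldType) n (C D : 'M[R]_n) :
  (forall p, p != 0 -> 0 < bform C p p) -> (forall p, p != 0 -> bform D p p < 0) ->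
  (C - D) \in unitmx.
Proof.
move=> C_pos D_neg; rewrite unitmxE unitfE; apply/negP => /det0P[v v_neq0 vCD].
have : bform (C - D) v v = 0 by rewrite /bform vCD mul0mx mxE.
by rewrite bformBm; have := C_pos v v_neq0; have := D_neg v v_neq0; lra.
Qed.

(* [lr + i li = (c + z) / (c - z)] for [z = dr + i di], and |c + z| < |c - z|
   since Re z < 0 < c. *)
Lemma cayley_scalar_lt1 (R : realFieldType) (c dr di lr li : R) : 0 < c -> dr < 0 ->
  c + dr = lr * (c - dr) + li * di -> di = - lr * di + li * (c - dr) ->
  lr ^+ 2 + li ^+ 2 < 1.
Proof.
move=> c_gt0 dr_lt0 e1 e2.
have key : (c + dr) ^+ 2 + di ^+ 2 = (lr ^+ 2 + li ^+ 2) * ((c - dr) ^+ 2 + di ^+ 2).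
  by rewrite [in LHS]e1 [X in _ + X ^+ 2 = _]e2; ring.
have : (c + dr) ^+ 2 < (c - dr) ^+ 2 by nra.
have := sqr_ge0 di; nra.
Qed.

Section RealParts.
Local Open Scope complex_scope.
Variable R : rcfType.
Local Notation Re := (@complex.Re R).
Local Notation Im := (@complex.Im R).
Local Notation toC := (fun x : R => x%:C).

Lemma Re_mulr_real (z : R[i]) r : Re (z * r%:C) = Re z * r.
Proof. by case: z => a b /=; ring. Qed.

Lemma Im_mulr_real (z : R[i]) r : Im (z * r%:C) = Im z * r.
Proof. by case: z => a b /=; ring. Qed.

Lemma map_Re_mulmx_real k m l (U : 'M[R[i]]_(k, m)) (M : 'M[R]_(m, l)) :
  map_mx Re (U *m map_mx toC M) = map_mx Re U *m M.
Proof.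
apply/matrixP => i j; rewrite !mxE (big_morph Re (id1 := 0) (op1 := +%R)) //.
  by apply: eq_bigr => h _; rewrite !mxE Re_mulr_real.
by case=> ? ? [].
Qed.

Lemma map_Im_mulmx_real k m l (U : 'M[R[i]]_(k, m)) (M : 'M[R]_(m, l)) :
  map_mx Im (U *m map_mx toC M) = map_mx Im U *m M.
Proof.
apply/matrixP => i j; rewrite !mxE (big_morph Im (id1 := 0) (op1 := +%R)) //.
  by apply: eq_bigr => h _; rewrite !mxE Im_mulr_real.
by case=> ? ? [].
Qed.

Lemma map_Re_scale k m (lam : R[i]) (W : 'M[R[i]]_(k, m)) :
  map_mx Re (lam *: W) = Re lam *: map_mx Re W + (- Im lam) *: map_mx Im W.
Proof. by apply/matrixP => i j; rewrite !mxE; case: lam (W i j) => [a b] [c d] /=; ring. Qed.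

Lemma map_Im_scale k m (lam : R[i]) (W : 'M[R[i]]_(k, m)) :
  map_mx Im (lam *: W) = Re lam *: map_mx Im W + Im lam *: map_mx Re W.
Proof. by apply/matrixP => i j; rewrite !mxE; case: lam (W i j) => [a b] [c d] /=; ring. Qed.

End RealParts.

Section CayleyTransform.
Local Open Scope complex_scope.
Variables (R : rcfType) (n : nat) (C D : 'M[R]_n).
Hypotheses (C_sym : C^T = C)
  (C_pos : forall p, p != 0 -> 0 < bform C p p)
  (D_neg : forall p, p != 0 -> bform D p p < 0).
Local Notation Re := (@complex.Re R).
Local Notation Im := (@complex.Im R).
Local Notation toC := (fun x : R => x%:C).

Lemma cayley_eigenvalue_lt1 lam :
  eigenvalue (map_mx toC (invmx (C - D) *m (C + D))) lam -> Re lam ^+ 2 + Im lam ^+ 2 < 1.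
Proof.
move=> /eigenvalueP[v v_eig v_neq0].
pose u := v *m map_mx toC (invmx (C - D)).
have v_def : v = u *m map_mx toC (C - D).
  by rewrite -mulmxA -map_mxM mulVmx ?unitmx_sub_definite // map_mx1 mulmx1.
have u_eig : u *m map_mx toC (C + D) = lam *: (u *m map_mx toC (C - D)).
  by rewrite -v_def -v_eig map_mxM mulmxA.
clearbody u; pose p := map_mx Re u; pose q := map_mx Im u.
have p_eq : p *m (C + D) = Re lam *: (p *m (C - D)) + (- Im lam) *: (q *m (C - D)).
  by rewrite -map_Re_mulmx_real u_eig map_Re_scale map_Re_mulmx_real map_Im_mulmx_real.
have q_eq : q *m (C + D) = Re lam *: (q *m (C - D)) + Im lam *: (p *m (C - D)).
  by rewrite -map_Im_mulmx_real u_eig map_Im_scale map_Re_mulmx_real map_Im_mulmx_real.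
have pq_neq0 : p != 0 \/ q != 0.
  case: (eqVneq p 0) => [p0|]; last by left.
  right; apply: contraNneq v_neq0 => q0; rewrite v_def.
  suff -> : u = 0 by rewrite mul0mx.
  apply/matrixP => i j; move/matrixP/(_ i j): p0; move/matrixP/(_ i j): q0.
  by rewrite !mxE; case: (u i j) => a b /= -> ->.
have form_signs r : 0 <= bform C r r /\ bform D r r <= 0.
  have [->|r_neq0] := eqVneq r 0; first by rewrite !bform0.
  by split; [exact/ltW/C_pos | exact/ltW/D_neg].
have C_comm : bform C q p = bform C p q by rewrite -{1}C_sym bform_trmx.
(* Pair both real equations with p and with q; the symmetry of C cancels the
   cross terms of C. *)
move: (bform_lincomb p p_eq) (bform_lincomb q p_eq).
move: (bform_lincomb p q_eq) (bform_lincomb q q_eq).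
rewrite !bformBm !bformDm C_comm => qp qq pp pq.
apply: (@cayley_scalar_lt1 _ (bform C p p + bform C q q) (bform D p p + bform D q q)
  (bform D q p - bform D p q)); try lra.
- by case: pq_neq0 => [/C_pos|/C_pos]; have := form_signs p; have := form_signs q; lra.
- by case: pq_neq0 => [/D_neg|/D_neg]; have := form_signs p; have := form_signs q; lra.
Qed.

End CayleyTransform.

Lemma seq_lt_ub (R : realFieldType) (T : eqType) (f : T -> R) (s : seq T) (b : R) :
  {in s, forall z, f z < b} -> exists2 B, B < b & {in s, forall z, f z <= B}.
Proof.
elim: s => [_ | z s IH lt_b]; first by exists (b - 1) => //; lra.
have /IH[B B_lt B_ub] : {in s, forall w, f w < b}.
  by move=> w ws; apply: lt_b; rewrite inE ws orbT.
exists (Num.max (f z) B) => [|w]; first by rewrite gt_max lt_b ?mem_head.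
by rewrite inE => /predU1P[->|/B_ub]; rewrite le_max ?lexx // => ->; rewrite orbT.
Qed.

Section SpectralRadius.
Local Open Scope classical_set_scope.
Variables (R : realType) (n : nat).
Local Notation toC := (fun x : R => x%:C%C).

Lemma spectral_radius_lt1 (M : 'M[R]_n) :
  (forall lam, eigenvalue (map_mx toC M) lam -> cmod lam < 1) -> spectral_radius M < 1.
Proof.
move=> eig_lt1.
have [rs char_rs] := closed_field_poly_normal (char_poly (map_mx toC M)).
have eig_rs lam : eigenvalue (map_mx toC M) lam = (lam \in rs).
  rewrite eigenvalue_root_char char_rs rootZ ?root_prod_XsubC //.
  by rewrite (monicP (char_poly_monic _)) oner_eq0.
have /seq_lt_ub[B B_lt1 B_ub] : {in rs, forall lam, cmod lam < 1}.
  by move=> lam; rewrite -eig_rs; exact: eig_lt1.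
rewrite /spectral_radius; set S := (X in sup X).
have [[lam lam_eig] | no_eig] := pselect (exists lam, eigenvalue (map_mx toC M) lam).
  apply: le_lt_trans B_lt1; apply: ge_sup; first by exists (cmod lam), lam.
  by move=> _ [lam' lam'_eig ->]; apply: B_ub; rewrite -eig_rs.
suff -> : S = set0 by rewrite sup0 ltr01.
by apply/seteqP; split => // r [lam lam_eig _]; apply: no_eig; exists lam.
Qed.

End SpectralRadius.

Lemma tridiag_entry (R : realFieldType) (i j : nat) :
  (if i == j then -2 else if (i.+1 == j) || (j.+1 == i) then 1 else 0) =
  hess_entry (@tri R) i j.
Proof.
rewrite /hess_entry /tri.
case: (ltngtP i j) => [ij | ji | <-]; last by rewrite leqnSn subSnn.
- have [<- | Sij] := eqVneq i.+1 j; first by rewrite leqnn subnn.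
  by rewrite /= ifN ?ifN //=; lia.
- have -> : (i.+1 == j) = false by lia.
  rewrite [RHS]ifT; last by lia.
  have [<- | Sji] := eqVneq j.+1 i; first by rewrite (_ : j.+2 - j = 2)%N //; lia.
  by rewrite nth_default //=; lia.
Qed.

Section Scheme.
Variable R : realType.
Implicit Types (s : pq_choice) (al : R).

Definition alpha_range s al : bool :=
  match s with PQ_1_0 => 1 < al | PQ_1_m1 => (1 + Num.sqrt 73) / 6 <= al end.

Lemma sqrt73_gt5 : 5 < Num.sqrt (73 : R).
Proof.
have : Num.sqrt (73 : R) ^+ 2 = 73 by rewrite sqr_sqrtr.
have := sqrtr_ge0 (73 : R); nra.
Qed.

Lemma alpha_range_gt1 s al : alpha_range s al -> 1 < al.
Proof. by case: s => //=; have := sqrt73_gt5; lra. Qed.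

Lemma cconst_bounds s al : alpha_range s al -> al <= 2 ->
  0 < cconst s al /\ cconst s al <= 1 / 4.
Proof.
move=> al_range al_le2; have al_gt1 := alpha_range_gt1 al_range.
case: s al_range => /= al_range; rewrite expr2; first by split; nra.
split; first by nra.
suff : 73 <= (6 * al - 1) ^+ 2 by rewrite expr2; nra.
by rewrite -(@sqr_sqrtr _ 73) // lerXn2r ?nnegrE ?sqrtr_ge0 //; lra.
Qed.

Lemma bform_Amat s al n (p : 'rV[R]_n) :
  bform (Amat s al n) p p = toeplitz_form (p 0) (wgt s al).
Proof. by rewrite bformE; apply: eq_bigr => i _; apply: eq_bigr => j _; rewrite mxE. Qed.

Lemma bform_tridiag n (p : 'rV[R]_n) :
  bform (tridiag R n) p p = toeplitz_form (p 0) tri.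
Proof.
rewrite bformE; apply: eq_bigr => i _; apply: eq_bigr => j _.
by rewrite mxE tridiag_entry.
Qed.

Lemma tr_Cmat s al n : (Cmat s al n)^T = Cmat s al n.
Proof.
by apply/matrixP => i j; rewrite !mxE eq_sym; congr (_ + _ * _); rewrite eq_sym orbC.
Qed.

Lemma bform_Cmat_gt0 s al n (p : 'rV[R]_n) :
  alpha_range s al -> al <= 2 -> p != 0 -> 0 < bform (Cmat s al n) p p.
Proof.
move=> al_range al_le2 /rV0Pn p_neq0; have [c_gt0 c_le] := cconst_bounds al_range al_le2.
rewrite bformDm bformZm bform_id bform_tridiag -acor0E.
exact: id_add_tri_gt0.
Qed.

Lemma bform_Dmat_lt0 s al K1 K2 tau h n (p : 'rV[R]_n) :
  1 < al -> al <= 2 -> 0 < tau -> 0 < h -> 0 <= K1 -> 0 <= K2 -> 0 < K1 + K2 ->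
  p != 0 -> bform (Dmat s al K1 K2 tau h n) p p < 0.
Proof.
move=> al_gt1 al_le2 tau_gt0 h_gt0 K1_ge0 K2_ge0 K_gt0 /rV0Pn p_neq0.
rewrite bformZm bformDm !bformZm bform_trmx bform_Amat -mulrDl.
rewrite pmulr_rlt0 ?divr_gt0 ?mulr_gt0 ?powR_gt0 // pmulr_rlt0 //.
apply: toeplitz_form_lt0 => //.
- by move=> d d_ge4; apply: wgt_ge0 => //; lra.
- by move=> M M_ge4; apply: sum_wgt_le0 => //; lra.
- exact: wgt_low.
Qed.

End Scheme.

Theorem theorem1 (R : realType) (s : pq_choice) (alpha K1 K2 : R) :
  (match s with
   | PQ_1_0 => 1 < alpha
   | PQ_1_m1 => (1 + Num.sqrt 73) / 6 <= alpha
   end) ->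
  alpha <= 2 ->
  0 <= K1 -> 0 <= K2 -> K1 ^+ 2 + K2 ^+ 2 != 0 ->
  forall (a b tau : R) (N : nat),
    a < b -> 0 < tau -> (2 <= N)%N ->
    let h := (b - a) / N%:R in
    let Cm := Cmat s alpha N.-1 in
    let Dm := Dmat s alpha K1 K2 tau h N.-1 in
    (Cm - Dm) \in unitmx /\
    spectral_radius (invmx (Cm - Dm) *m (Cm + Dm)) < 1.
Proof.
move=> al_range al_le2 K1_ge0 K2_ge0 K_neq0 a b tau N ab tau_gt0 N_ge2 h Cm Dm.
have al_gt1 := alpha_range_gt1 al_range.
have K_gt0 : 0 < K1 + K2.
  rewrite lt_def addr_ge0 // andbT; apply: contraNneq K_neq0 => K0.
  have [-> ->] : K1 = 0 /\ K2 = 0 by split; lra.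
  by rewrite expr0n addr0.
have h_gt0 : 0 < h by rewrite divr_gt0 ?subr_gt0 // ltr0n; lia.
have C_pos p : p != 0 -> 0 < bform Cm p p by exact: bform_Cmat_gt0.
have D_neg p : p != 0 -> bform Dm p p < 0 by exact: bform_Dmat_lt0.
split; first exact: unitmx_sub_definite.
apply: spectral_radius_lt1 => lam /(cayley_eigenvalue_lt1 (tr_Cmat _ _ _) C_pos D_neg).
by move=> lam_lt1; rewrite /cmod -sqrtr1 ltr_sqrt.
Qed.
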